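(* Let $S$ be an integral monoid with zero $0$, and let $0,1\in E\subseteq E(S)$. Then $S$ is inductive when regarded as an $E$-demigroup via $d(s)=1$ for all $s$ (i.e. as a left $E$-monoid) if and only if it is inductive when regarded as an $E$-demigroup via $d(0)=0$ and $d(s)=1$ for $s\neq0$ (i.e. as a left $E$-monoid with zero). In that case $C^0_E(S)$ is closed under the multiplication of $Rest(E,S)$, and the multiplication of $Rest_0(E,S)$ coincides with the restriction to $C^0_E(S)$ of the multiplication of $Rest(E,S)$.
   Context: For a semigroup $S$, $E(S)$ is its set of idempotents; for $e,f\in E(S)$, $e\le_r f$ iff $e=ef$. $E\subseteq E(S)$ is right pre-reduced if $e=ef$ and $f=fe$ imply $e=f$ for $e,f\in E$. A monoid with zero is integral if $st=0$ implies $s=0$ or $t=0$. A demigroup is a semigroup $S$ with unary $d$ such that $d(x)\in E(S)$, $d(x)x=x$, $d(xy)=d(xd(y))$. For $E\subseteq E(S)$, $S$ is an $E$-demigroup if $d(s)\in E$ for all $s$ and $ed(e)=e$ for all $e\in E$. It is inductive if $E$ is right pre-reduced, $(E,\le_r)$ is a meet-semilattice with meet $\wedge$, and there is a function $\cdot:S\times E\to E$ (necessarily unique) with (I1) for all $t\in S$, $e\in E$, $s\in S$: ($ste=st$ and $sd(t)=s$) iff $s(t\cdot e)=s$; (I2) for $s\in S$, $e,f\in E$: $se=sf=s$ implies $s(e\wedge f)=s$. For an inductive $E$-demigroup, $Rest_d(E,S)$ is the set $C^d_E(S)=\{(e,s)\in E\times S\mid es=s,\ d(e)=d(s)\}$ with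 multiplication $(e,s)(f,t)=(e\wedge(s\cdot f),(e\wedge(s\cdot f))st)$ and $D((e,s))=(e,e)$. $Rest(E,S)$ denotes $Rest_d(E,S)$ for $d\equiv1$ (underlying set $C_E(S)=\{(e,s)\in E\times S\mid es=s\}$); $Rest_0(E,S)$ denotes $Rest_d(E,S)$ for $d(0)=0$, $d(s)=1$ ($s\ne0$) (underlying set $C^0_E(S)=\{(e,s)\in C_E(S)\mid s=0\Rightarrow e=0\}$). *)

Set Implicit Arguments.

Section Defs.
Variable S : Type.
Variable mul : S -> S -> S.

Definition idem (e : S) : Prop := mul e e = e.

Definition demigroup (d : S -> S) : Prop :=
  (forall x, idem (d x)) /\
  (forall x, mul (d x) x = x) /\
  (forall x y, d (mul x y) = d (mul x (d y))).

Definition E_demigroup (E : S -> Prop) (d : S -> S) : Prop :=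
  demigroup d /\ (forall s, E (d s)) /\ (forall e, E e -> mul e (d e) = e).

Definition le_r (e f : S) : Prop := e = mul e f.

Definition right_pre_reduced (E : S -> Prop) : Prop :=
  forall e f, E e -> E f -> e = mul e f -> f = mul f e -> e = f.

Definition is_meet (E : S -> Prop) (m : S -> S -> S) : Prop :=
  forall e f, E e -> E f ->
    E (m e f) /\ le_r (m e f) e /\ le_r (m e f) f /\
    (forall g, E g -> le_r g e -> le_r g f -> le_r g (m e f)).

(* dot : S x E -> E satisfying (I1) and (I2) relative to d and the meet m *)
Definition dot_ok (E : S -> Prop) (d : S -> S) (m : S -> S -> S)
    (dot : S -> S -> S) : Prop :=
  (forall t e, E e -> E (dot t e)) /\
  (forall t e s, E e ->
     ((mul (mul s t) e = mul s t /\ mul s (d t) = s) <-> mul s (dot t e) = s)) /\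
  (forall s e f, E e -> E f -> mul s e = s -> mul s f = s -> mul s (m e f) = s).

Definition inductive (E : S -> Prop) (d : S -> S) : Prop :=
  E_demigroup E d /\ right_pre_reduced E /\
  exists m, is_meet E m /\ exists dot, dot_ok E d m dot.

Definition C_E (E : S -> Prop) (p : S * S) : Prop :=
  E (fst p) /\ mul (fst p) (snd p) = snd p.

Definition C0_E (E : S -> Prop) (zero : S) (p : S * S) : Prop :=
  C_E E p /\ (snd p = zero -> fst p = zero).

Definition rest_mul (m : S -> S -> S) (dot : S -> S -> S) (p q : S * S) : S * S :=
  let g := m (fst p) (dot (snd p) (fst q)) in
  (g, mul (mul g (snd p)) (snd q)).

End Defs.

From Stdlib Require Import Classical ClassicalEpsilon.

(* Let S be an integral monoid with zero, E a set of idempotents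
   containing 0 and 1, d1 the constant map 1 and d0 the map with d0 0 = 0 and
   d0 s = 1 otherwise.
   - Both d1 and d0 make S an E-demigroup (for d0 this uses integrality).
   - The two notions of inductivity only differ in axiom (I1), which holds
     trivially at t = 0 for d1 and for d0; so a dot operation for one of them
     becomes one for the other after redefining it at t = 0 (as 0 for d0, as 1
     for d1).  This gives the equivalence.
   - By right pre-reducedness, (I1) determines t.e from d(t) alone; since d1
     and d0 agree off 0, the two dot operations agree at every t <> 0.
   - For (e,s),(f,t) in C^0_E(S): if s = 0 then e = 0 and both products are
     (0,0); otherwise both products use the same meet e /\ (s.f), and
     integrality together with x /\ 0 = 0 and s.0 = 0 keeps the product in
     C^0_E(S). *)

(* Uniqueness of the dot operation: (I1) determines t.e from the value d(t),
   so two inductive structures whose d agree at t have the same t.e. *)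
Lemma dot_unique {S : Type} {mul : S -> S -> S} {E : S -> Prop}
    {d d' : S -> S} {m dot dot' : S -> S -> S} :
  (forall e, E e -> idem mul e) -> right_pre_reduced mul E ->
  dot_ok mul E d m dot -> dot_ok mul E d' m dot' ->
  forall t x, E x -> d t = d' t -> dot t x = dot' t x.
Proof.
  intros idemE rpr [dotE [I1 _]] [dotE' [I1' _]] t x Ex dt.
  (* s := t.x satisfies the left-hand side of (I1), and this side only sees d t *)
  destruct (proj2 (I1 t x (dot t x) Ex) (idemE _ (dotE t x Ex))) as [A1 A2].
  destruct (proj2 (I1' t x (dot' t x) Ex) (idemE _ (dotE' t x Ex))) as [B1 B2].
  apply rpr; [apply dotE | apply dotE' | | ]; auto.
  - symmetry; apply (proj1 (I1' t x (dot t x) Ex)); split; [exact A1 |].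
    rewrite <- dt; exact A2.
  - symmetry; apply (proj1 (I1 t x (dot' t x) Ex)); split; [exact B1 |].
    rewrite dt; exact B2.
Qed.

Section IntegralMonoid.

Variables (S : Type) (mul : S -> S -> S) (one zero : S) (E : S -> Prop).
Hypothesis assoc : forall x y z, mul x (mul y z) = mul (mul x y) z.
Hypothesis mul1s : forall x, mul one x = x.
Hypothesis muls1 : forall x, mul x one = x.
Hypothesis mul0s : forall x, mul zero x = zero.
Hypothesis muls0 : forall x, mul x zero = zero.
Hypothesis integral : forall s t, mul s t = zero -> s = zero \/ t = zero.
Hypothesis idemE : forall e, E e -> idem mul e.
Hypothesis E0 : E zero.
Hypothesis E1 : E one.
Variable d0 : S -> S.
Hypothesis d0_zero : d0 zero = zero.
Hypothesis d0_nonzero : forall s, s <> zero -> d0 s = one.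

Let d1 : S -> S := fun _ => one.

Lemma d1_E_demigroup : E_demigroup mul E d1.
Proof.
  unfold d1; split; [split; [| split] | split]; intros; unfold idem; auto.
Qed.

Lemma d0_cases : forall x, d0 x = zero /\ x = zero \/ d0 x = one /\ x <> zero.
Proof.
  intro x; destruct (classic (x = zero)) as [-> | nz]; [left | right]; auto.
Qed.

(* The map d0 makes S a left E-monoid with zero; the demigroup law
   d0(xy) = d0(x d0(y)) is where integrality is needed. *)
Lemma d0_E_demigroup : E_demigroup mul E d0.
Proof.
  split; [split; [| split] | split].
  - intro x; unfold idem; destruct (d0_cases x) as [[-> _] | [-> _]];
      [apply idemE, E0 | apply mul1s].
  - intro x; destruct (d0_cases x) as [[-> ->] | [-> _]]; auto.
  - intros x y; destruct (d0_cases y) as [[-> ->] | [-> ynz]].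
    + rewrite muls0; reflexivity.
    + rewrite muls1; destruct (d0_cases x) as [[_ ->] | [_ xnz]].
      * rewrite mul0s; reflexivity.
      * assert (xy_nz : mul x y <> zero)
          by (intro xy0; destruct (integral _ _ xy0); contradiction).
        rewrite !d0_nonzero; auto.
  - intro x; destruct (d0_cases x) as [[-> _] | [-> _]]; assumption.
  - intros x _; destruct (d0_cases x) as [[-> ->] | [-> _]]; auto.
Qed.

Definition patch_at_zero (z : S) (dot : S -> S -> S) (t e : S) : S :=
  if excluded_middle_informative (t = zero) then z else dot t e.

Lemma dot_ok_d1_to_d0 (m dot : S -> S -> S) :
  dot_ok mul E d1 m dot -> dot_ok mul E d0 m (patch_at_zero zero dot).
Proof.
  intros [dotE [I1 I2]]; split; [| split; [| exact I2]];
    unfold patch_at_zero; intros t e.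
  - destruct (excluded_middle_informative _); auto.
  - intros s Ee; destruct (excluded_middle_informative (t = zero)) as [-> | tnz].
    + rewrite d0_zero, muls0, mul0s; tauto.
    + rewrite (d0_nonzero t tnz); exact (I1 t e s Ee).
Qed.

Lemma dot_ok_d0_to_d1 (m dot : S -> S -> S) :
  dot_ok mul E d0 m dot -> dot_ok mul E d1 m (patch_at_zero one dot).
Proof.
  intros [dotE [I1 I2]]; split; [| split; [| exact I2]];
    unfold patch_at_zero, d1; intros t e.
  - destruct (excluded_middle_informative _); auto.
  - intros s Ee; destruct (excluded_middle_informative (t = zero)) as [-> | tnz].
    + rewrite muls0, mul0s; tauto.
    + rewrite <- (d0_nonzero t tnz); exact (I1 t e s Ee).
Qed.

Lemma inductive_d1_iff_d0 : inductive mul E d1 <-> inductive mul E d0.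
Proof.
  split; intros [_ [rpr [m [meet [dot ok]]]]];
    (split; [| split; [exact rpr | exists m; split; [exact meet |]]]).
  - exact d0_E_demigroup.
  - exists (patch_at_zero zero dot); apply dot_ok_d1_to_d0, ok.
  - exact d1_E_demigroup.
  - exists (patch_at_zero one dot); apply dot_ok_d0_to_d1, ok.
Qed.

Lemma meet_zero_l {m : S -> S -> S} : is_meet mul E m ->
  forall x, E x -> m zero x = zero.
Proof.
  intros meet x Ex; destruct (meet zero x E0 Ex) as [_ [le0 _]].
  unfold le_r in le0; rewrite muls0 in le0; exact le0.
Qed.

Lemma meet_zero_r {m : S -> S -> S} : is_meet mul E m ->
  forall x, E x -> m x zero = zero.
Proof.
  intros meet x Ex; destruct (meet x zero Ex E0) as [_ [_ [le0 _]]].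
  unfold le_r in le0; rewrite muls0 in le0; exact le0.
Qed.

(* In a left E-monoid, s.0 = 0 for s <> 0: by (I1), s.0 = (s.0) s 0 = 0. *)
Lemma dot_d1_zero {m dot : S -> S -> S} : dot_ok mul E d1 m dot ->
  forall u, u <> zero -> dot u zero = zero.
Proof.
  intros [dotE [I1 _]] u unz.
  destruct (proj2 (I1 u zero (dot u zero) E0) (idemE _ (dotE u zero E0))) as [A _].
  rewrite muls0 in A.
  destruct (integral _ _ (eq_sym A)); [assumption | contradiction].
Qed.

Lemma rest_mul_C0 (m dot1 dot0 : S -> S -> S) :
  right_pre_reduced mul E -> is_meet mul E m ->
  dot_ok mul E d1 m dot1 -> dot_ok mul E d0 m dot0 ->
  forall p q, C0_E mul E zero p -> C0_E mul E zero q ->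
    C0_E mul E zero (rest_mul mul m dot1 p q) /\
    rest_mul mul m dot1 p q = rest_mul mul m dot0 p q.
Proof.
  intros rpr meet ok1 ok0 [e s] [f t] [[Ee _] s0] [[Ef _] t0]; simpl in *.
  pose proof (proj1 ok1) as dot1E; pose proof (proj1 ok0) as dot0E.
  unfold rest_mul, C0_E, C_E; simpl.
  destruct (classic (s = zero)) as [-> | snz].
  - rewrite (s0 eq_refl), (meet_zero_l meet _ (dot1E _ _ Ef)),
      (meet_zero_l meet _ (dot0E _ _ Ef)), !mul0s; tauto.
  - assert (same_dot : dot1 s f = dot0 s f).
    { apply (dot_unique idemE rpr ok1 ok0 s f Ef).
      unfold d1; symmetry; apply d0_nonzero, snz. }
    destruct (meet e (dot1 s f) Ee (dot1E s f Ef)) as [Eg _].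
    rewrite <- same_dot; split; [split; [split; [exact Eg |] |] | reflexivity].
    + rewrite !assoc, (idemE _ Eg); reflexivity.
    + intro prod0; destruct (integral _ _ prod0) as [gs0 | ->].
      * destruct (integral _ _ gs0); [assumption | contradiction].
      * rewrite (t0 eq_refl), (dot_d1_zero ok1 s snz); apply meet_zero_r; assumption.
Qed.

End IntegralMonoid.

Theorem proposition3p12 :
  forall (S : Type) (mul : S -> S -> S) (one zero : S) (E : S -> Prop),
    (forall x y z, mul x (mul y z) = mul (mul x y) z) ->
    (forall x, mul one x = x) -> (forall x, mul x one = x) ->
    (forall x, mul zero x = zero) -> (forall x, mul x zero = zero) ->
    (forall s t, mul s t = zero -> s = zero \/ t = zero) ->
    (forall e, E e -> idem mul e) -> E zero -> E one ->
    forall d0 : S -> S, d0 zero = zero -> (forall s, s <> zero -> d0 s = one) ->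
    (inductive mul E (fun _ => one) <-> inductive mul E d0) /\
    (inductive mul E (fun _ => one) ->
     forall (m dot1 dot0 : S -> S -> S),
       is_meet mul E m ->
       dot_ok mul E (fun _ => one) m dot1 ->
       dot_ok mul E d0 m dot0 ->
       forall p q, C0_E mul E zero p -> C0_E mul E zero q ->
         C0_E mul E zero (rest_mul mul m dot1 p q) /\
         rest_mul mul m dot1 p q = rest_mul mul m dot0 p q).
Proof.
  intros S mul one zero E assoc mul1s muls1 mul0s muls0 integral idemE E0 E1
    d0 d0_zero d0_nonzero.
  split.
  - exact (inductive_d1_iff_d0 _ _ _ _ _ mul1s muls1 mul0s muls0 integral idemE
             E0 E1 _ d0_zero d0_nonzero).
  - intros [_ [rpr _]] m dot1 dot0 meet ok1 ok0.
    exact (rest_mul_C0 _ _ _ _ _ assoc mul0s muls0 integral idemE E0 _ d0_nonzero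
             _ _ _ rpr meet ok1 ok0).
Qed.
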